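(* Let $R$ be a left and right Noetherian ring and $A\in\operatorname{mod}R$. Then for every Gorenstein projective module $H\in\operatorname{mod}R^{op}$ and every transpose $\operatorname{Tr}A$ of $A$, the module $H\oplus\operatorname{Tr}A$ is a Gorenstein transpose of $A$.
   Context: $\operatorname{mod}R$ (resp. $\operatorname{mod}R^{op}$) is the category of finitely generated left (resp. right) $R$-modules, and $(-)^*=\operatorname{Hom}(-,R)$. A module is Gorenstein projective if it is isomorphic to $\operatorname{Im}(P_0\to P^0)$ for some exact complex $\cdots\to P_1\to P_0\to P^0\to P^1\to\cdots$ of projective modules that stays exact under $\operatorname{Hom}(-,P)$ for every projective $P$. A transpose of $A\in\operatorname{mod}R$ is $\operatorname{Coker}(f^*:P_0^*\to P_1^* )$ for some exact sequence $P_1\xrightarrow{f}P_0\to A\to0$ in $\operatorname{mod}R$ with $P_0,P_1$ projective. A Gorenstein transpose of $A$ is $\operatorname{Coker}(g^*:X_0^*\to X_1^* )$ for some exact sequence $X_1\xrightarrow{g}X_0\to A\to 0$ in $\operatorname{mod}R$ with $X_0,X_1$ Gorenstein projective. *)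

(* Modules over a (possibly non-commutative) ring R:
   left R-modules  = lmodType R,
   right R-modules = lmodType R^c (R^c = converse ring; the right action
                     m.r is written (r : R^c) *: m).
   The ring R regarded as a left module over itself is R^o (regular). *)
From HB Require Import structures.
From mathcomp Require Import all_boot all_order all_algebra.
Set Implicit Arguments. Unset Strict Implicit. Unset Printing Implicit Defensive.
Import GRing.Theory.
Local Open Scope ring_scope.

Definition fin_gen (S : pzRingType) (M : lmodType S) : Prop :=
  exists (n : nat) (s : 'I_n -> M),
    forall m : M, exists c : 'I_n -> S, m = \sum_(i < n) c i *: s i.

Definition surj (S : pzRingType) (M N : lmodType S) (g : {linear M -> N}) : Prop :=
  forall y : N, exists x : M, g x = y.

Definition exact_at (S : pzRingType) (M N K : lmodType S)
  (g : {linear M -> N}) (h : {linear N -> K}) : Prop :=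
  forall y : N, h y = 0 <-> exists x : M, g x = y.

Definition projective (S : pzRingType) (P : lmodType S) : Prop :=
  fin_gen P /\
  forall (M N : lmodType S) (g : {linear M -> N}) (f : {linear P -> N}),
    surj g -> exists h : {linear P -> M}, forall p : P, g (h p) = f p.

(* G is Gorenstein projective: G is isomorphic to Im (d 0 : P 0 -> P 1) for an
   exact Z-indexed complex (P i, d i : P i -> P (i+1)) of projective modules
   which stays exact under Hom(-, Q) for every projective Q. *)
Definition gorenstein_projective (S : pzRingType) (G : lmodType S) : Prop :=
  exists (P : int -> lmodType S) (d : forall i : int, {linear P i -> P (i + 1)}),
    [/\ (forall i, projective (P i)),
        (forall i, exact_at (d i) (d (i + 1))),
        (forall (Q : lmodType S), projective Q ->
           forall (i : int) (phi : {linear P (i + 1) -> Q}),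
             (forall x, phi (d i x) = 0) ->
             exists psi : {linear P (i + 1 + 1) -> Q},
               forall y, phi y = psi (d (i + 1) y)) &
        (exists e : {linear G -> P (0 + 1)},
          injective e /\ (forall y, (exists g, e g = y) <-> (exists x, d 0 x = y)))].

(* T (a right R-module) is isomorphic to Coker (f^dual : P0^dual -> P1^dual), where
   X^dual = Hom_R(X, R) = {linear X -> R^o} with right action (u.r)(x) = u(x) r.
   The isomorphism Coker f^dual ~ T is given as a surjective right-linear map
   phi : P1^dual -> T whose kernel is the image of f^dual (precomposition with f). *)
Definition coker_dual (R : pzRingType) (P1 P0 : lmodType R)
  (f : {linear P1 -> P0}) (T : lmodType R^c) : Prop :=
  exists phi : {linear P1 -> R^o} -> T,
    [/\ (forall u v w : {linear P1 -> R^o},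
           (forall x, (w x : R) = u x + v x) -> phi w = phi u + phi v),
        (forall (u w : {linear P1 -> R^o}) (r : R),
           (forall x, (w x : R) = (u x : R) * r) -> phi w = (r : R^c) *: phi u),
        (forall t : T, exists u, phi u = t) &
        (forall u, (phi u = 0) <->
           (exists g : {linear P0 -> R^o}, forall x, u x = g (f x)))].

Definition is_transpose (R : pzRingType) (A : lmodType R) (T : lmodType R^c) : Prop :=
  exists (P1 P0 : lmodType R) (f : {linear P1 -> P0}) (p : {linear P0 -> A}),
    [/\ projective P1, projective P0, exact_at f p, surj p & coker_dual f T].

Definition is_Gtranspose (R : pzRingType) (A : lmodType R) (T : lmodType R^c) : Prop :=
  exists (X1 X0 : lmodType R) (g : {linear X1 -> X0}) (p : {linear X0 -> A}),
    [/\ gorenstein_projective X1 /\ fin_gen X1,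
        gorenstein_projective X0 /\ fin_gen X0,
        exact_at g p, surj p & coker_dual g T].

Definition left_noetherian (S : pzRingType) : Prop :=
  forall I : pred S,
    I 0 -> (forall x y, I x -> I y -> I (x + y)) ->
    (forall r x, I x -> I (r * x)) ->
    exists (n : nat) (s : 'I_n -> S), (forall i, I (s i)) /\
      forall x, I x -> exists c : 'I_n -> S, x = \sum_(i < n) c i * s i.

Definition right_noetherian (S : pzRingType) : Prop := left_noetherian S^c.

(* Write M* = Hom_R(M, R); for a right module M this is a left module.  If
   P1 --f--> P0 --> A --> 0 is the projective presentation giving T, then
   P1 (+) H* --(f, 0)--> P0 --> A --> 0 is a presentation of A whose dual
   cokernel is Coker(f* ) (+) H** = T (+) H, since H is reflexive. *)

From HB Require Import structures.
From mathcomp Require Import all_boot all_order all_algebra.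
From mathcomp Require Import boolp.
Set Implicit Arguments. Unset Strict Implicit. Unset Printing Implicit Defensive.
Import GRing.Theory.
Local Open Scope ring_scope.

Definition mkLin (S : pzRingType) (U V : lmodType S) (f : U -> V) (fL : linear f)
  : {linear U -> V} := HB.pack f (GRing.isLinear.Build S U V *:%R f fL).

Lemma mkLinE (S : pzRingType) (U V : lmodType S) (f : U -> V) (fL : linear f) x :
  mkLin fL x = f x.
Proof. by []. Qed.

Section Modules.
Variable S : pzRingType.

Section Injections.
Variables M N : lmodType S.

Lemma inl_linear : linear (fun x : M => (x, 0) : M * N).
Proof. by move=> a x y; apply: injective_projections; rewrite /= ?scaler0 ?addr0. Qed.

Lemma inr_linear : linear (fun y : N => (0, y) : M * N).
Proof. by move=> a x y; apply: injective_projections; rewrite /= ?scaler0 ?addr0. Qed.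

Definition inlL : {linear M -> (M * N)%type} := mkLin inl_linear.
Definition inrL : {linear N -> (M * N)%type} := mkLin inr_linear.

Lemma pair_split (z : (M * N)%type) : z = inlL z.1 + inrL z.2.
Proof. by case: z => x y; apply: injective_projections; rewrite /= ?addr0 ?add0r. Qed.
End Injections.
Arguments inlL {M N}.
Arguments inrL {M N}.

Lemma fin_gen_fin (M : lmodType S) (I : finType) (s : I -> M) :
  (forall m : M, exists c : I -> S, m = \sum_i c i *: s i) -> fin_gen M.
Proof.
move=> h; exists #|I|, (fun k => s (enum_val k)) => m.
have [c ->] := h m; exists (fun k => c (enum_val k)).
rewrite (reindex (enum_val : 'I_#|I| -> I)) //=.
by exists enum_rank => x _; rewrite ?enum_valK ?enum_rankK.
Qed.

Lemma fin_gen_surj (M N : lmodType S) (f : {linear M -> N}) :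
  surj f -> fin_gen M -> fin_gen N.
Proof.
move=> sf [n [s hs]]; exists n, (fun i => f (s i)) => y.
have [x <-] := sf y; have [c ->] := hs x; exists c.
by rewrite linear_sum; apply: eq_bigr => i _; rewrite linearZ.
Qed.

Lemma fin_gen_prod (M N : lmodType S) : fin_gen M -> fin_gen N -> fin_gen (M * N)%type.
Proof.
move=> [n [s hs]] [m [t ht]].
apply: (@fin_gen_fin _ _ (fun k : ('I_n + 'I_m)%type => match k with
  inl i => inlL (s i) | inr j => inrL (t j) end)) => z.
have [c hc] := hs z.1; have [c' hc'] := ht z.2.
exists (fun k => match k with inl i => c i | inr j => c' j end).
rewrite big_sumType {1}(pair_split z) hc hc' !linear_sum.
by congr (_ + _); apply: eq_bigr => i _; rewrite linearZ.
Qed.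

Definition dual_basis (P : lmodType S) : Prop :=
  exists (I : finType) (s : I -> P) (u : I -> {linear P -> S^o}),
    forall x, x = \sum_i (u i x : S) *: s i.

(* Dual basis lemma, first half: split the presentation S^n --> P. *)
Lemma projective_dual_basis (P : lmodType S) : projective P -> dual_basis P.
Proof.
case=> [[n [s hs]] hlift].
pose pi (c : 'rV[S]_n) : P := \sum_i c 0 i *: s i.
have pi_linear : linear pi.
  move=> a c c'; rewrite /pi scaler_sumr -big_split /=; apply: eq_bigr => i _.
  by rewrite !mxE scalerDl scalerA.
have pi_surj : surj (mkLin pi_linear).
  move=> y; have [c ->] := hs y; exists (\row_i c i).
  by apply: eq_bigr => i _; rewrite mxE.
have [sec hsec] := hlift _ _ _ idfun pi_surj.
have coord_linear i : linear (fun x : P => (sec x 0 i : S^o)).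
  by move=> a x y; rewrite linearP !mxE.
exists 'I_n, s, (fun i => mkLin (coord_linear i)) => x.
by have := hsec x; rewrite mkLinE /pi /= => {1}<-.
Qed.

(* Dual basis lemma, second half: lift each generator separately. *)
Lemma dual_basis_projective (P : lmodType S) : dual_basis P -> projective P.
Proof.
move=> [I [s [u hu]]]; split.
  by apply: (@fin_gen_fin _ _ s) => m; exists (fun i => u i m); exact: hu.
move=> M N g f sg.
pose m i := sval (cid (sg (f (s i)))).
have hm i : g (m i) = f (s i) by exact: svalP (cid (sg (f (s i)))).
have lift_linear : linear (fun x : P => \sum_i (u i x : S) *: m i).
  move=> a x y; rewrite scaler_sumr -big_split /=; apply: eq_bigr => i _.
  by rewrite linearP scalerDl scalerA.
exists (mkLin lift_linear) => p; rewrite mkLinE linear_sum {2}(hu p) linear_sum.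
by apply: eq_bigr => i _; rewrite !linearZ hm.
Qed.

Lemma dual_basis_prod (M N : lmodType S) :
  dual_basis M -> dual_basis N -> dual_basis (M * N)%type.
Proof.
move=> [I [s [u hu]]] [J [t [v hv]]].
exists (I + J)%type, (fun k => match k with inl i => inlL (s i) | inr j => inrL (t j) end),
  (fun k => match k return {linear (M * N)%type -> S^o} with
    inl i => u i \o fst | inr j => v j \o snd end) => z.
rewrite big_sumType {1}(pair_split z) {1}(hu z.1) {1}(hv z.2) !linear_sum.
by congr (_ + _); apply: eq_bigr => i _; exact: linearZ.
Qed.

Lemma projective_prod (M N : lmodType S) :
  projective M -> projective N -> projective (M * N)%type.
Proof.
move=> /projective_dual_basis hM /projective_dual_basis hN.
exact/dual_basis_projective/dual_basis_prod.
Qed.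

Definition hom_exact (P : int -> lmodType S) (d : forall i, {linear P i -> P (i + 1)}) :=
  forall (Q : lmodType S), projective Q ->
    forall (i : int) (phi : {linear P (i + 1) -> Q}),
      (forall x, phi (d i x) = 0) ->
      exists psi : {linear P (i + 1 + 1) -> Q}, forall y, phi y = psi (d (i + 1) y).

(* A projective P is resolved by ... -> P*P -> P*P -> ..., (a, b) |-> (b, 0). *)
Lemma projective_gproj (P : lmodType S) : projective P -> gorenstein_projective P.
Proof.
move=> hP; pose C (i : int) := (P * P)%type.
pose d (i : int) : {linear C i -> C (i + 1)} := inlL \o snd.
exists C, d; split.
- by move=> i; apply: projective_prod.
- move=> i [a b]; split.
    by move=> /(congr1 fst) /= ->; exists (0, a).
  by case=> [[x y]] <-.
- move=> Q hQ i phi hphi.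
  exists (phi \o (inrL : {linear P -> C (i + 1)}) \o fst) => z /=.
  by rewrite {1}(pair_split z) linearD (hphi (0, z.1)) add0r.
- exists inlL; split; first by move=> x y [].
  by move=> y; split; case=> x <-; [exists (0, x) | exists x.2].
Qed.

Section ProductComplex.
Variables (P P' : int -> lmodType S).
Variables (d : forall i, {linear P i -> P (i + 1)}) (d' : forall i, {linear P' i -> P' (i + 1)}).

Definition prodC (i : int) : lmodType S := (P i * P' i)%type.

Lemma prod_d_linear i : linear (fun z : prodC i => (d i z.1, d' i z.2) : prodC (i + 1)).
Proof. by move=> a z z'; apply: injective_projections; rewrite /= linearP. Qed.

Definition prod_d (i : int) : {linear prodC i -> prodC (i + 1)} := mkLin (@prod_d_linear i).

Lemma prod_exact i :
  exact_at (d i) (d (i + 1)) -> exact_at (d' i) (d' (i + 1)) ->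
  exact_at (prod_d i) (prod_d (i + 1)).
Proof.
move=> hex hex' [a b]; split.
  case=> /(hex a).1 [x hx] /(hex' b).1 [x' hx'].
  by exists (x, x'); rewrite mkLinE hx hx'.
case=> [[x x']] [<- <-].
by congr pair; [apply/(hex _).2; exists x | apply/(hex' _).2; exists x'].
Qed.

(* Extend a functional on each factor separately, then add. *)
Lemma prod_hom_exact : hom_exact d -> hom_exact d' -> hom_exact prod_d.
Proof.
move=> hhom hhom' Q hQ i phi hphi.
have hphi1 x : (phi \o inlL) (d i x) = 0.
  by rewrite -(hphi (x, 0)) mkLinE /= linear0.
have hphi2 x : (phi \o inrL) (d' i x) = 0.
  by rewrite -(hphi (0, x)) mkLinE /= linear0.
have [psi1 h1] := hhom Q hQ i _ hphi1.
have [psi2 h2] := hhom' Q hQ i _ hphi2.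
exists ((psi1 \o fst) \+ (psi2 \o snd) : {linear prodC (i + 1 + 1) -> Q}) => y.
by rewrite {1}(pair_split y) linearD; move: (h1 y.1) (h2 y.2) => /= -> ->.
Qed.
End ProductComplex.

Lemma gproj_prod (X Y : lmodType S) :
  gorenstein_projective X -> gorenstein_projective Y -> gorenstein_projective (X * Y)%type.
Proof.
move=> [P [d [hP hex hhom [e [ei he]]]]] [P' [d' [hP' hex' hhom' [e' [ei' he']]]]].
exists (prodC P P'), (prod_d d d'); split.
- by move=> i; apply: projective_prod.
- by move=> i; apply: prod_exact.
- exact: prod_hom_exact.
have e_linear : linear (fun z : (X * Y)%type => (e z.1, e' z.2) : prodC P P' (0 + 1)).
  by move=> a z z'; apply: injective_projections; rewrite /= linearP.
exists (mkLin e_linear); split.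
  by move=> [x y] [x' y'] [/ei -> /ei' ->].
move=> [a b]; split.
  case=> [[x y]] [ha hb].
  have [[z hz] [z' hz']] := ((he a).1 (ex_intro _ x ha), (he' b).1 (ex_intro _ y hb)).
  by exists (z, z'); rewrite mkLinE hz hz'.
case=> [[x y]] [ha hb].
have [[z hz] [z' hz']] := ((he a).2 (ex_intro _ x ha), (he' b).2 (ex_intro _ y hb)).
by exists (z, z'); rewrite mkLinE hz hz'.
Qed.

End Modules.
Arguments inlL {S M N}.
Arguments inrL {S M N}.

Section RightDual.
Variable R : pzRingType.
(* R as a right module over itself. *)
Local Notation RR := ((R^c)^o).

Section Dual.
Variable M : lmodType R^c.

(* The dual M* = Hom_R(M, R) of a right module M; a left module via
   (r u)(x) = r u(x). *)
Record rdual := RDual {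
  rdf :> M -> R;
  rdfD : forall x y, rdf (x + y) = rdf x + rdf y;
  rdfZ : forall (r : R) x, rdf ((r : R^c) *: x) = rdf x * r }.

Lemma rdual_ext (u v : rdual) : (forall x, u x = v x) -> u = v.
Proof.
case: u v => [f fD fZ] [g gD gZ] /= /funext efg; subst g.
by congr RDual; apply: Prop_irrelevance.
Qed.

HB.instance Definition _ := gen_eqMixin rdual.
HB.instance Definition _ := gen_choiceMixin rdual.

Lemma rdf0 (u : rdual) : u 0 = 0.
Proof. by apply: (@addIr _ (u 0)); rewrite -rdfD !add0r. Qed.

Definition rd0 : rdual.
Proof. by refine (@RDual (fun _ => 0) _ _) => *; rewrite ?addr0 ?mul0r. Defined.
Definition rdopp (u : rdual) : rdual.
Proof.
by refine (@RDual (fun x => - u x) _ _) => *; rewrite ?rdfD ?rdfZ ?opprD ?mulNr.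
Defined.
Definition rdadd (u v : rdual) : rdual.
Proof.
by refine (@RDual (fun x => u x + v x) _ _) => *; rewrite ?rdfZ ?mulrDl // !rdfD addrACA.
Defined.
Definition rdscale (r : R) (u : rdual) : rdual.
Proof.
by refine (@RDual (fun x => r * u x) _ _) => *; rewrite ?rdfD ?rdfZ ?mulrDr ?mulrA.
Defined.

Lemma rd_addA : associative rdadd.
Proof. by move=> *; apply: rdual_ext => x /=; rewrite addrA. Qed.
Lemma rd_addC : commutative rdadd.
Proof. by move=> *; apply: rdual_ext => x /=; rewrite addrC. Qed.
Lemma rd_add0 : left_id rd0 rdadd.
Proof. by move=> *; apply: rdual_ext => x /=; rewrite add0r. Qed.
Lemma rd_addN : left_inverse rd0 rdopp rdadd.
Proof. by move=> *; apply: rdual_ext => x /=; rewrite addNr. Qed.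
HB.instance Definition _ := GRing.isZmodule.Build rdual rd_addA rd_addC rd_add0 rd_addN.

Lemma rd_scaleA a b v : rdscale a (rdscale b v) = rdscale (a * b) v.
Proof. by apply: rdual_ext => x /=; rewrite mulrA. Qed.
Lemma rd_scale1 : left_id 1 rdscale.
Proof. by move=> *; apply: rdual_ext => x /=; rewrite mul1r. Qed.
Lemma rd_scaleDr : right_distributive rdscale +%R.
Proof. by move=> *; apply: rdual_ext => x /=; rewrite mulrDr. Qed.
Lemma rd_scaleDl v : {morph rdscale^~ v : a b / a + b}.
Proof. by move=> *; apply: rdual_ext => x /=; rewrite mulrDl. Qed.
HB.instance Definition _ :=
  GRing.Zmodule_isLmodule.Build R rdual rd_scaleA rd_scale1 rd_scaleDr rd_scaleDl.

Lemma rd_sumE (I : finType) (F : I -> rdual) x : (\sum_i F i) x = \sum_i F i x.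
Proof. exact: (big_morph (fun u : rdual => u x)). Qed.

Lemma rdf_sum (u : rdual) (I : finType) (F : I -> M) : u (\sum_i F i) = \sum_i u (F i).
Proof. exact: (big_morph u (rdfD u) (rdf0 u)). Qed.

Definition fromL (f : {linear M -> RR}) : rdual.
Proof. by refine (@RDual (fun x => (f x : R)) _ _) => *; rewrite ?linearD ?linearZ. Defined.

Lemma toL_linear (u : rdual) : linear (fun x : M => (u x : RR)).
Proof. by move=> a x y; rewrite rdfD rdfZ. Qed.
Definition toL (u : rdual) : {linear M -> RR} := mkLin (toL_linear u).

Lemma rdfB (u : rdual) x y : u (x - y) = u x - u y.
Proof. exact: (linearB (toL u)). Qed.
End Dual.

Definition rdcomp (M N : lmodType R^c) (v : rdual N) (f : {linear M -> N}) : rdual M.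
Proof.
by refine (@RDual M (fun x => v (f x)) _ _) => *; rewrite ?linearD ?linearZ ?rdfD ?rdfZ.
Defined.

Lemma rdcompE (M N : lmodType R^c) (v : rdual N) (f : {linear M -> N}) x :
  rdcomp v f x = v (f x).
Proof. by []. Qed.

Definition reflexive_module (M : lmodType R^c) : Prop :=
  forall Phi : {linear rdual M -> R^o}, exists! x : M, forall u, Phi u = u x.

Lemma reflexive_sep (M : lmodType R^c) : reflexive_module M ->
  forall x : M, (forall u : rdual M, u x = 0) -> x = 0.
Proof.
move=> hM x hx; have [y [_ yuniq]] := hM \0.
by rewrite -(yuniq x) ?(yuniq 0) // => u; rewrite ?hx ?rdf0.
Qed.

Lemma reflexive_of_sep (M : lmodType R^c) :
  (forall Phi : {linear rdual M -> R^o}, exists x : M, forall u, Phi u = u x) ->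
  (forall x : M, (forall u : rdual M, u x = 0) -> x = 0) -> reflexive_module M.
Proof.
move=> heval hsep Phi; have [x hx] := heval Phi; exists x; split=> // y hy.
by apply/eqP; rewrite -subr_eq0; apply/eqP/hsep => u; rewrite rdfB -hx -hy subrr.
Qed.

Lemma dual_basis_expand (P : lmodType R^c) (I : finType) (s : I -> P)
  (u : I -> {linear P -> RR}) :
  (forall x, x = \sum_i (u i x : R^c) *: s i) ->
  forall v : rdual P, v = \sum_i v (s i) *: fromL (u i).
Proof.
move=> hu v; apply: rdual_ext => y; rewrite rd_sumE {1}(hu y) rdf_sum.
by apply: eq_bigr => i _; rewrite rdfZ.
Qed.

Lemma dual_basis_refl (P : lmodType R^c) : dual_basis P -> reflexive_module P.
Proof.
move=> [I [s [u hu]]] Phi.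
exists (\sum_i ((Phi (fromL (u i)) : R) : R^c) *: s i); split.
  move=> v; rewrite rdf_sum {1}(dual_basis_expand hu v) linear_sum.
  by apply: eq_bigr => i _; rewrite linearZ rdfZ.
by move=> x hx; rewrite [RHS]hu; apply: eq_bigr => i _; rewrite hx.
Qed.

Lemma dual_basis_dual (P : lmodType R^c) : dual_basis P -> dual_basis (rdual P).
Proof.
move=> [I [s [u hu]]].
have eval_linear i : linear (fun v : rdual P => (v (s i) : R^o)) by [].
exists I, (fun i => fromL (u i)), (fun i => mkLin (eval_linear i)) => v.
exact: dual_basis_expand.
Qed.

Lemma regular_dual_basis : dual_basis RR.
Proof.
exists 'I_1, (fun _ => (1 : RR)), (fun _ => idfun) => x.
by rewrite big_ord1 /GRing.scale /= mulr1.
Qed.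

End RightDual.

Section DualResolution.
Variables (R : pzRingType) (P : int -> lmodType R^c).
Variable d : forall i, {linear P i -> P (i + 1)}.
Hypotheses (hP : forall i, projective (P i)) (hex : forall i, exact_at (d i) (d (i + 1))).
Hypothesis hhom : hom_exact d.

Lemma functional_factors i (v : rdual (P (i + 1))) :
  (forall x, v (d i x) = 0) ->
  exists w : rdual (P (i + 1 + 1)), forall y, v y = w (d (i + 1) y).
Proof.
move=> hv.
have [psi hpsi] := @hhom _ (dual_basis_projective (regular_dual_basis R)) i (toL v) hv.
by exists (fromL psi) => y; rewrite /= -hpsi.
Qed.

(* The differential d i, with its target index given up to an equation; the
   dual complex is indexed by 1 - j, where 1 - (j + 1) + 1 = 1 - j is only
   a propositional equality. *)
Definition dd (i k : int) (E : i + 1 = k) : {linear P i -> P k} :=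
  match E in _ = k return {linear P i -> P k} with erefl => d i end.

Lemma dd_id i (E : i + 1 = i + 1) x : dd E x = d i x.
Proof. by rewrite (eq_irrelevance E erefl). Qed.

Section Indices.
Variables (i j k : int) (E1 : i + 1 = j) (E2 : j + 1 = k).

Lemma dd_exact y : dd E2 y = 0 <-> exists x, dd E1 x = y.
Proof. by case: j / E1 E2 y => E2'; case: k / E2'; exact: hex. Qed.

Lemma dd_functional_factors (v : rdual (P j)) :
  (forall x, v (dd E1 x) = 0) -> exists w : rdual (P k), forall y, v y = w (dd E2 y).
Proof. by case: j / E1 E2 v => E2'; case: k / E2'; exact: functional_factors. Qed.

Lemma dual_exact (y : rdual (P j)) :
  rdcomp y (dd E1) = 0 <-> exists w : rdual (P k), rdcomp w (dd E2) = y.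
Proof.
split=> [hy | [w <-]].
  have [w hw] : exists w : rdual (P k), forall z, y z = w (dd E2 z).
    by apply: dd_functional_factors => x; rewrite -rdcompE hy.
  by exists w; apply: rdual_ext => z; rewrite hw.
apply: rdual_ext => x; rewrite !rdcompE /=.
by have /(dd_exact _).2 -> := ex_intro (fun z => dd E1 z = dd E1 x) x erefl; rewrite rdf0.
Qed.

(* A functional on (P j)* killing the image of (P k)* is evaluation at a
   point of the image of dd E1 (P j and P k are reflexive). *)
Lemma dual_functional_eval (Phi : {linear rdual (P j) -> R^o}) :
  (forall v : rdual (P k), Phi (rdcomp v (dd E2)) = 0) ->
  exists z : P i, forall v, Phi v = v (dd E1 z).
Proof.
move=> hPhi.
have [x [hx _]] := dual_basis_refl (projective_dual_basis (hP j)) Phi.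
have [z hz] : exists z, dd E1 z = x.
  apply/dd_exact/(reflexive_sep (dual_basis_refl (projective_dual_basis (hP k)))).
  by move=> v; rewrite -rdcompE -hx hPhi.
by exists z => v; rewrite hz hx.
Qed.

(* Hom(-, Q)-exactness of the dual complex, for Q projective: expand the
   values of phi in a dual basis of Q and apply dual_functional_eval. *)
Lemma dual_hom_exact (Q : lmodType R) (hQ : projective Q)
  (phi : {linear rdual (P j) -> Q}) :
  (forall v : rdual (P k), phi (rdcomp v (dd E2)) = 0) ->
  exists psi : {linear rdual (P i) -> Q}, forall v, phi v = psi (rdcomp v (dd E1)).
Proof.
move=> hphi; have [I [t [w hw]]] := projective_dual_basis hQ.
have coord_eval l : exists z : P i, forall v, (w l \o phi) v = v (dd E1 z).
  by apply: dual_functional_eval => v; rewrite /= hphi linear0.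
pose z l := sval (cid (coord_eval l)).
have hz l v : (w l (phi v) : R) = v (dd E1 (z l)) := svalP (cid (coord_eval l)) v.
have psi_linear : linear (fun y : rdual (P i) => \sum_l (y (z l) : R) *: t l).
  move=> r y y'; rewrite scaler_sumr -big_split /=; apply: eq_bigr => l _.
  by rewrite scalerDl scalerA.
exists (mkLin psi_linear) => v; rewrite mkLinE {1}(hw (phi v)).
by apply: eq_bigr => l _; rewrite hz.
Qed.
End Indices.

(* The dual complex (P (1 - j))*, whose differentials are the transposes of
   the d (- j). *)
Lemma shift_index (j : int) : 1 - (j + 1) + 1 = 1 - j.
Proof. by rewrite opprD addrA subrK. Qed.

Definition dualC (j : int) : lmodType R := rdual (P (1 - j)).

Lemma dual_d_linear (j : int) :
  linear (fun v : dualC j => rdcomp v (dd (shift_index j)) : dualC (j + 1)).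
Proof. by move=> r v v'; apply: rdual_ext. Qed.

Definition dual_d (j : int) : {linear dualC j -> dualC (j + 1)} := mkLin (@dual_d_linear j).

Lemma dualC_projective j : projective (dualC j).
Proof. exact/dual_basis_projective/dual_basis_dual/projective_dual_basis. Qed.

Lemma dual_d_exact j : exact_at (dual_d j) (dual_d (j + 1)).
Proof. by move=> y; exact: dual_exact. Qed.

Lemma dual_d_hom_exact : hom_exact dual_d.
Proof.
move=> Q hQ j phi hphi.
have [psi hpsi] :=
  @dual_hom_exact _ _ _ (shift_index (j + 1)) (shift_index j) _ hQ _ hphi.
by exists psi.
Qed.

Section Image.
Variables (H : lmodType R^c) (e : {linear H -> P (0 + 1)}).
Hypotheses (e_inj : injective e) (e_im : forall y, (exists h, e h = y) <-> (exists x, d 0 x = y)).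

Definition coim (x : P 0) : H := sval (cid ((e_im (d 0 x)).2 (ex_intro _ x erefl))).

Lemma coimE x : e (coim x) = d 0 x.
Proof. exact: svalP (cid ((e_im (d 0 x)).2 (ex_intro _ x erefl))). Qed.

Lemma coim_linear : linear coim.
Proof. by move=> r x y; apply: e_inj; rewrite linearP !coimE linearP. Qed.

Definition coimL : {linear P 0 -> H} := mkLin coim_linear.

Lemma coim_surj h : exists x, coim x = h.
Proof.
have [x hx] := (e_im (e h)).1 (ex_intro _ h erefl).
by exists x; apply: e_inj; rewrite coimE.
Qed.

Lemma coim_d x : coim (d (-1) x) = 0.
Proof.
apply: e_inj; rewrite coimE linear0.
exact: (@hex (-1) _).2 (ex_intro _ x erefl).
Qed.

Lemma d_e h : d (0 + 1) (e h) = 0.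
Proof.
have [x <-] := (e_im (e h)).1 (ex_intro _ h erefl).
exact: (@hex 0 _).2 (ex_intro _ x erefl).
Qed.

Definition iota (u : rdual H) : rdual (P 0) := rdcomp u coimL.

Lemma iota_linear : linear iota.
Proof. by move=> r u v; apply: rdual_ext. Qed.

Lemma iota_inj : injective iota.
Proof.
move=> u u' huu; apply: rdual_ext => h; have [x <-] := coim_surj h.
exact: (congr1 (fun w : rdual (P 0) => w x) huu).
Qed.

Lemma iota_image y :
  (exists u, iota u = y) <-> exists x : rdual (P (0 + 1)), rdcomp x (d 0) = y.
Proof.
split=> [[u <-] | [x <-]].
  have iota_d x : iota u (d (-1) x) = 0 by rewrite rdcompE mkLinE coim_d rdf0.
  have [w hw] := @functional_factors (-1) (iota u) iota_d.
  by exists w; apply: rdual_ext => z; rewrite rdcompE -hw.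
by exists (rdcomp x e); apply: rdual_ext => z; rewrite !rdcompE /= coimE.
Qed.

Lemma functional_extends (u : rdual H) : exists x : rdual (P (0 + 1)), rdcomp x e = u.
Proof.
have [x hx] := (iota_image (iota u)).1 (ex_intro _ u erefl).
exists x; apply: iota_inj; rewrite -hx; apply: rdual_ext => z.
by rewrite !rdcompE /= coimE.
Qed.

(* H* is a quotient of the finitely generated (P (0 + 1))*. *)
Lemma dual_fin_gen : fin_gen (rdual H).
Proof.
have restr_linear : linear (fun v : rdual (P (0 + 1)) => rdcomp v e).
  by move=> r v v'; apply: rdual_ext.
apply: (@fin_gen_surj _ _ _ (mkLin restr_linear)).
  by move=> u; have [v hv] := functional_extends u; exists v.
exact: (dual_basis_projective (dual_basis_dual (projective_dual_basis (hP (0 + 1))))).1.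
Qed.

(* H is reflexive: a functional Phi on H* gives one on (P (0 + 1))*, which is
   evaluation at some d 0 z, and then Phi is evaluation at coim z. *)
Lemma image_reflexive : reflexive_module H.
Proof.
apply: reflexive_of_sep => [Phi | h hh].
  have restr_linear : linear (fun v : rdual (P (0 + 1)) => Phi (rdcomp v e)).
    by move=> r v v'; rewrite -linearP; congr (Phi _); apply: rdual_ext.
  have [z hz] : exists z : P 0, forall v, Phi (rdcomp v e) = v (d 0 z).
    apply: (@dual_functional_eval _ _ _ erefl erefl (mkLin restr_linear)) => w.
    rewrite mkLinE -(linear0 Phi); congr (Phi _); apply: rdual_ext => h.
    by rewrite !rdcompE /= d_e rdf0.
  exists (coim z) => u; have [v <-] := functional_extends u.
  by rewrite (hz v) rdcompE coimE.
apply: e_inj; rewrite linear0.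
apply: (reflexive_sep (dual_basis_refl (projective_dual_basis (hP (0 + 1))))) => v.
exact: (hh (rdcomp v e)).
Qed.

(* H* is Gorenstein projective, resolved by the dual complex, in which it is
   the image of dual_d 0 via iota. *)
Lemma dual_gproj : gorenstein_projective (rdual H).
Proof.
exists dualC, dual_d; split.
- exact: dualC_projective.
- exact: dual_d_exact.
- exact: dual_d_hom_exact.
exists (mkLin iota_linear : {linear rdual H -> dualC (0 + 1)}); split.
  exact: iota_inj.
move=> y; rewrite iota_image.
have dual_d0 (x : rdual (P (0 + 1))) : dual_d 0 x = rdcomp x (d 0).
  by apply: rdual_ext => z; rewrite mkLinE !rdcompE dd_id.
by split; case=> x <-; exists x; rewrite dual_d0.
Qed.
End Image.

End DualResolution.

Lemma gproj_dual (R : pzRingType) (H : lmodType R^c) : gorenstein_projective H ->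
  [/\ gorenstein_projective (rdual H), fin_gen (rdual H) & reflexive_module H].
Proof.
case=> P [d [hP hex hhom [e [e_inj e_im]]]]; split.
- exact: (@dual_gproj _ _ _ hP hex hhom _ _ e_inj e_im).
- exact: (@dual_fin_gen _ _ _ hP hex hhom _ _ e_inj e_im).
- exact: (@image_reflexive _ _ _ hP hex hhom _ _ e_inj e_im).
Qed.

Section DualCokernel.
Variables (R : pzRingType) (P1 P0 : lmodType R) (f : {linear P1 -> P0}).
Variables (T : lmodType R^c) (phi : {linear P1 -> R^o} -> T).
Hypotheses (phiD : forall u v w : {linear P1 -> R^o},
              (forall x, (w x : R) = u x + v x) -> phi w = phi u + phi v)
  (phiZ : forall (u w : {linear P1 -> R^o}) (r : R),
              (forall x, (w x : R) = (u x : R) * r) -> phi w = (r : R^c) *: phi u)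
  (phi_surj : forall t : T, exists u, phi u = t)
  (phi_ker : forall u, (phi u = 0) <->
              (exists g : {linear P0 -> R^o}, forall x, u x = g (f x))).

Lemma phi_ext (u v : {linear P1 -> R^o}) : (forall x, u x = v x) -> phi u = phi v.
Proof.
have phi0 : phi \0 = 0.
  apply: (@addIr _ (phi \0)); rewrite add0r -(phiD (u := \0) (v := \0) (w := \0)) //.
  by move=> x; rewrite /= addr0.
move=> huv; rewrite (phiD (u := v) (v := \0) (w := u)) ?phi0 ?addr0 //.
by move=> x; rewrite huv /= addr0.
Qed.

Variables (H : lmodType R^c) (hH : reflexive_module H).
Local Notation G := (rdual H).

(* The point of H at which the G-component of u : (P1 * G)* evaluates. *)
Definition evalH (u : {linear (P1 * G)%type -> R^o}) : H :=
  sval (cid (hH (u \o inrL))).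

Lemma evalH_spec (u : {linear (P1 * G)%type -> R^o}) (g : G) :
  u (inrL g) = g (evalH u).
Proof. exact: (svalP (cid (hH (u \o inrL)))).1. Qed.

Lemma evalH_unique (u : {linear (P1 * G)%type -> R^o}) (h : H) :
  (forall g : G, u (inrL g) = g h) -> evalH u = h.
Proof. exact: (svalP (cid (hH (u \o inrL)))).2. Qed.

(* Coker((f, 0)* ) = H ** (+) Coker(f* ) = H (+) T. *)
Lemma coker_dual_prod : coker_dual (f \o fst : {linear (P1 * G)%type -> P0}) (H * T)%type.
Proof.
exists (fun u => (evalH u, phi (u \o inlL))); split.
- move=> u v w huvw; congr pair; last by apply: phiD => x; rewrite /= huvw.
  by apply: evalH_unique => g; rewrite huvw rdfD -!evalH_spec.
- move=> u w r huw; congr pair; last by apply: phiZ => x; rewrite /= huw.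
  by apply: evalH_unique => g; rewrite huw rdfZ -!evalH_spec.
- move=> [h t]; have [u1 <-] := phi_surj t.
  have ev_linear : linear (fun g : G => (g h : R^o)) by [].
  exists ((u1 \o fst) \+ (mkLin ev_linear \o snd) : {linear (P1 * G)%type -> R^o}).
  congr pair.
    by apply: evalH_unique => g; rewrite /= linear0 add0r.
  by apply: phi_ext => x; rewrite /= addr0.
- move=> u; split.
    move=> [/= hu1 hu2]; have [g hg] := (phi_ker _).1 hu2.
    exists g => z; rewrite {1}(pair_split z) linearD /= -hg.
    by rewrite evalH_spec hu1 rdf0 addr0.
  move=> [g hg]; congr pair; last by apply/phi_ker; exists g => x; rewrite /= hg.
  by apply: evalH_unique => g'; rewrite hg /= !linear0 rdf0.
Qed.
End DualCokernel.

Theorem corollary3p2 (R : pzRingType)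
  (hl : left_noetherian R) (hr : right_noetherian R)
  (A : lmodType R) (hA : fin_gen A)
  (H : lmodType R^c) (hHfg : fin_gen H) (hH : gorenstein_projective H)
  (T : lmodType R^c) (hT : is_transpose A T) :
  is_Gtranspose A (H * T)%type.
Proof.
have [G_gp G_fg H_refl] := gproj_dual hH.
have [P1 [P0 [f [p [hP1 hP0 hfp p_surj [phi [phiD phiZ phi_surj phi_ker]]]]]]] := hT.
exists (P1 * rdual H)%type, P0, (f \o fst), p; split.
- split; first exact: gproj_prod (projective_gproj hP1) G_gp.
  exact: fin_gen_prod hP1.1 G_fg.
- by split; [apply: projective_gproj | case: hP0].
- move=> y; rewrite hfp.
  by split; case=> x <-; [exists (x, 0) | exists x.1].
- exact: p_surj.
- exact: (coker_dual_prod phiD phiZ phi_surj phi_ker H_refl).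
Qed.
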